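(* Let $\alpha=2\sqrt7-4$. If $W$ is a balanced tetrahedral erasure channel with $Q(W)\ge\alpha$, then $Q(W^{s})\ge\alpha$ and $Q(W^{p})\ge\alpha$.
   Context: $\mathrm{TEC}(p,q,r,s,t)$ denotes a tetrahedral erasure channel with parameters $p,q,r,s,t\ge0$ summing to $1$. Its entropy is $H=\frac{q+r+s}{2}+t$, its edge mass is $E=q+r+s$, and its Quetelet index is $Q=E/(H(1-H))$ (defined when $0<H<1$). It is balanced if $q=r=s$. For $W=\mathrm{TEC}(p,q,r,s,t)$, the serial child is $W^{s}=\mathrm{TEC}(p^2,\ ps+sq+qp,\ pq+qr+rp,\ pr+rs+sp,\ 1-\text{(sum of the other four)})$ and the parallel child is $W^{p}=\mathrm{TEC}(1-\text{(sum of the other four)},\ ts+sq+qt,\ tq+qr+rt,\ tr+rs+st,\ t^2)$. (For a balanced $W$ with $H(W)=x$, $E(W)=y$ one has $H(W^{p})=x^2-y^2/12$, $E(W^{p})=2xy-2y^2/3$, $H(W^{s})=2x-x^2+y^2/12$, $E(W^{s})=2y-2xy-2y^2/3$.) *)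

From Stdlib Require Import Reals.
Open Scope R_scope.

Record TEC : Type := mkTEC { tp : R; tq : R; tr : R; ts : R; tt : R }.

Definition valid (W : TEC) : Prop :=
  0 <= tp W /\ 0 <= tq W /\ 0 <= tr W /\ 0 <= ts W /\ 0 <= tt W /\
  tp W + tq W + tr W + ts W + tt W = 1.

Definition balanced (W : TEC) : Prop := tq W = tr W /\ tr W = ts W.

Definition entropy (W : TEC) : R := (tq W + tr W + ts W) / 2 + tt W.
Definition edge_mass (W : TEC) : R := tq W + tr W + ts W.

(* Quetelet index; only meaningful when 0 < H < 1. *)
Definition quetelet (W : TEC) : R :=
  edge_mass W / (entropy W * (1 - entropy W)).

(* "Q(W) >= a", including that Q(W) is defined (0 < H(W) < 1). *)
Definition Q_ge (W : TEC) (a : R) : Prop :=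
  0 < entropy W < 1 /\ a <= quetelet W.

Definition serial_child (W : TEC) : TEC :=
  let p := tp W in let q := tq W in let r := tr W in let s := ts W in
  let p' := p * p in
  let q' := p * s + s * q + q * p in
  let r' := p * q + q * r + r * p in
  let s' := p * r + r * s + s * p in
  mkTEC p' q' r' s' (1 - (p' + q' + r' + s')).

Definition parallel_child (W : TEC) : TEC :=
  let q := tq W in let r := tr W in let s := ts W in let t := tt W in
  let q' := t * s + s * q + q * t in
  let r' := t * q + q * r + r * t in
  let s' := t * r + r * s + s * t in
  let t' := t * t in
  mkTEC (1 - (q' + r' + s' + t')) q' r' s' t'.

Definition alpha : R := 2 * sqrt 7 - 4.

(* For a balanced channel only H and E matter, and both children are explicit
   polynomial maps of (H, E).  The serial map is the parallel one conjugated by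
   H |-> 1 - H, under which Q is invariant, so it suffices that the parallel step
   preserves E >= alpha H (1 - H).  On the feasible segment
   alpha H (1 - H) <= E <= min (2 H, 2 (1 - H)) the margin
   E' - alpha H' (1 - H') is a concave quartic in E, so only the two endpoints
   need checking.  At the upper one the margin is visibly nonnegative; at the
   lower one it factors as H^2 (1 - H)^3 h(H) with h > 0, a factorisation that
   holds exactly because alpha^2 + 8 alpha = 12. *)

From Stdlib Require Import Reals Lra Nsatz.
From Coquelicot Require Import Rcomplements.
Open Scope R_scope.

Lemma alpha_sq_eq : alpha ^ 2 + 8 * alpha = 12.
Proof.
  unfold alpha.
  replace ((2 * sqrt 7 - 4) ^ 2) with (4 * (sqrt 7 * sqrt 7) - 16 * sqrt 7 + 16) by ring.
  rewrite sqrt_sqrt by lra.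
  ring.
Qed.

Lemma alpha_bounds : 1.291 <= alpha <= 1.292.
Proof.
  unfold alpha.
  assert (Hlo : sqrt (2.6455 * 2.6455) <= sqrt 7) by (apply sqrt_le_1_alt; lra).
  assert (Hhi : sqrt 7 <= sqrt (2.646 * 2.646)) by (apply sqrt_le_1_alt; lra).
  rewrite sqrt_square in Hlo, Hhi by lra.
  lra.
Qed.

(* The bracket is the second divided difference of the quartic at L, y, U. *)
Lemma quartic_nonneg_between (c0 c1 c2 c4 L y U : R) :
  L <= y <= U ->
  c2 + c4 * (L ^ 2 + y ^ 2 + U ^ 2 + L * y + L * U + y * U) <= 0 ->
  0 <= c0 + c1 * L + c2 * L ^ 2 + c4 * L ^ 4 ->
  0 <= c0 + c1 * U + c2 * U ^ 2 + c4 * U ^ 4 ->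
  0 <= c0 + c1 * y + c2 * y ^ 2 + c4 * y ^ 4.
Proof.
  intros [HLy HyU] Hconcave HL HU.
  set (g z := c0 + c1 * z + c2 * z ^ 2 + c4 * z ^ 4).
  change (0 <= g L) in HL; change (0 <= g U) in HU; change (0 <= g y).
  assert (Hinterp : (U - L) * g y = (U - y) * g L + (y - L) * g U
    - (y - L) * (U - y) * (U - L) * (c2 + c4 * (L ^ 2 + y ^ 2 + U ^ 2 + L * y + L * U + y * U)))
    by (unfold g; ring).
  destruct (Req_dec L U) as [<- | HLU].
  - replace y with L by lra. exact HL.
  - apply (Rmult_le_reg_l (U - L)); [lra |].
    rewrite Rmult_0_r, Hinterp.
    assert (0 <= (U - y) * g L) by (apply Rmult_le_pos; lra).
    assert (0 <= (y - L) * g U) by (apply Rmult_le_pos; lra).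
    assert (0 <= (y - L) * (U - y) * (U - L)) by (repeat apply Rmult_le_pos; lra).
    nra.
Qed.

Definition parallel_margin (a x y : R) : R :=
  (2 * x * y - 2 / 3 * y ^ 2) - a * ((x ^ 2 - y ^ 2 / 12) * (1 - (x ^ 2 - y ^ 2 / 12))).

Lemma parallel_margin_quartic (a x y : R) :
  parallel_margin a x y =
  - a * x ^ 2 * (1 - x ^ 2) + 2 * x * y + (- 2 / 3 - a * (2 * x ^ 2 - 1) / 12) * y ^ 2
  + a / 144 * y ^ 4.
Proof. unfold parallel_margin; field. Qed.

Lemma parallel_margin_nonneg_between (a x L y U : R) :
  0 <= a <= 16 / 3 -> 0 <= L -> L <= y <= U -> U <= 1 ->
  0 <= parallel_margin a x L -> 0 <= parallel_margin a x U ->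
  0 <= parallel_margin a x y.
Proof.
  intros Ha HL0 HLyU HU1.
  rewrite !parallel_margin_quartic.
  apply quartic_nonneg_between; [exact HLyU |].
  assert (Hsum : L ^ 2 + y ^ 2 + U ^ 2 + L * y + L * U + y * U <= 6)
    by (assert (L <= 1) by lra; assert (y <= 1) by lra; simpl; nra).
  assert (0 <= a * x ^ 2) by (apply Rmult_le_pos; [lra | apply pow2_ge_0]).
  assert (0 <= a * (6 - (L ^ 2 + y ^ 2 + U ^ 2 + L * y + L * U + y * U)))
    by (apply Rmult_le_pos; lra).
  lra.
Qed.

Lemma parallel_margin_double_nonneg (a x : R) :
  0 <= a <= 2 -> 0 <= parallel_margin a x (2 * x).
Proof.
  intros Ha.
  replace (parallel_margin a x (2 * x)) with (x ^ 2 * (4 / 3 - 2 * a / 3 + 4 / 9 * (a * x ^ 2)))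
    by (unfold parallel_margin; field).
  assert (0 <= a * x ^ 2) by (apply Rmult_le_pos; [lra | apply pow2_ge_0]).
  apply Rmult_le_pos; [apply pow2_ge_0 | lra].
Qed.

Lemma parallel_margin_double_compl_nonneg (a x : R) :
  0 <= a <= 4 / 3 -> 1 / 2 <= x <= 1 -> 0 <= parallel_margin a x (2 * (1 - x)).
Proof.
  intros Ha Hx.
  set (e := 1 - x).
  replace x with (1 - e) by (unfold e; ring).
  assert (He : 0 <= e <= 1 / 2) by (unfold e; lra).
  clearbody e.
  replace (parallel_margin a (1 - e) (2 * e))
    with (e * (4 - 2 * a + e * (14 * a / 3 - 20 / 3) + a * e ^ 2 * (-8 / 3 + 4 * e / 9)))
    by (unfold parallel_margin; field).
  apply Rmult_le_pos; [lra |].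
  assert (0 <= a * e ^ 2 * e) by (repeat apply Rmult_le_pos; try apply pow2_ge_0; lra).
  assert (0 <= a * e * (1 / 2 - e)) by (repeat apply Rmult_le_pos; lra).
  assert (0 <= (20 / 3 - 10 * a / 3) * (1 / 2 - e)) by (apply Rmult_le_pos; lra).
  nra.
Qed.

Lemma parallel_margin_alpha_boundary_nonneg (x : R) :
  0 <= x <= 1 -> 0 <= parallel_margin alpha x (alpha * (x * (1 - x))).
Proof.
  intros Hx.
  set (e := 1 - x).
  replace x with (1 - e) by (unfold e; ring).
  assert (He : 0 <= e <= 1) by (unfold e; lra).
  clearbody e.
  assert (Hab := alpha_bounds).
  set (h := (-32 + 76 * alpha / 3) + e * (295 * alpha / 9 - 128 / 3)
            + e ^ 2 * (2 - e) * (176 / 3 - 409 * alpha / 9)).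
  assert (Hfactor : parallel_margin alpha (1 - e) (alpha * ((1 - e) * e))
                    = (1 - e) ^ 2 * e ^ 3 * h).
  { (* nsatz handles neither [^] nor division: powers are unfolded by [simpl], and
       [/ 3], [/ 9], [/ 12] become atoms constrained by their defining equations. *)
    assert (Halpha := alpha_sq_eq).
    assert (/ 3 * 3 = 1) by field.
    assert (/ 9 * 9 = 1) by field.
    assert (/ 12 * 12 = 1) by field.
    unfold parallel_margin, h, Rdiv. simpl in *.
    nsatz. }
  rewrite Hfactor.
  assert (Hcubic : 0 <= e ^ 2 * (2 - e) <= 1).
  { split.
    - apply Rmult_le_pos; [apply pow2_ge_0 | lra].
    - assert (0 <= (1 - e) * (1 + e - e ^ 2)) by (apply Rmult_le_pos; simpl; nra).
      nra. }
  assert (0 <= (295 * alpha / 9 - 128 / 3 + 0.36) * e) by (apply Rmult_le_pos; lra).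
  assert (0 <= (176 / 3 - 409 * alpha / 9 + 0.05) * (e ^ 2 * (2 - e)))
    by (apply Rmult_le_pos; lra).
  apply Rmult_le_pos; [apply Rmult_le_pos; apply pow_le |]; unfold h; lra.
Qed.

Lemma parallel_margin_nonneg (x y : R) :
  0 <= x <= 1 -> y <= 2 * x -> y <= 2 * (1 - x) -> alpha * (x * (1 - x)) <= y ->
  0 <= parallel_margin alpha x y.
Proof.
  intros Hx Hy2x Hy2cx Hlow.
  assert (Hab := alpha_bounds).
  assert (HL0 : 0 <= alpha * (x * (1 - x))) by (apply Rmult_le_pos; [lra | nra]).
  assert (Hlo := parallel_margin_alpha_boundary_nonneg x Hx).
  destruct (Rle_lt_dec x (1 / 2)).
  - apply (parallel_margin_nonneg_between _ _ (alpha * (x * (1 - x))) _ (2 * x)); try lra.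
    apply parallel_margin_double_nonneg; lra.
  - apply (parallel_margin_nonneg_between _ _ (alpha * (x * (1 - x))) _ (2 * (1 - x))); try lra.
    apply parallel_margin_double_compl_nonneg; lra.
Qed.

Definition quetelet_ge (a h e : R) : Prop := 0 < h < 1 /\ a * (h * (1 - h)) <= e.

Lemma Q_geP (W : TEC) (a : R) : Q_ge W a <-> quetelet_ge a (entropy W) (edge_mass W).
Proof.
  unfold Q_ge, quetelet_ge, quetelet.
  split; intros [Hh Hq]; split; try exact Hh;
    apply Rle_div_r; try exact Hq; apply Rmult_lt_0_compat; lra.
Qed.

Lemma quetelet_ge_compl (a h e : R) : quetelet_ge a h e -> quetelet_ge a (1 - h) e.
Proof.
  intros [Hh Hq]; split; [lra |].
  replace ((1 - h) * (1 - (1 - h))) with (h * (1 - h)) by ring.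
  exact Hq.
Qed.

Lemma quetelet_ge_parallel (h e : R) :
  e <= 2 * h -> e <= 2 * (1 - h) -> quetelet_ge alpha h e ->
  quetelet_ge alpha (h ^ 2 - e ^ 2 / 12) (2 * h * e - 2 / 3 * e ^ 2).
Proof.
  intros He2h He2ch [Hh Hq].
  assert (Hab := alpha_bounds).
  assert (He0 : 0 < e) by (assert (0 < h * (1 - h)) by nra; nra).
  split.
  - simpl. nra.
  - assert (Hmargin := parallel_margin_nonneg h e ltac:(lra) He2h He2ch Hq).
    unfold parallel_margin in Hmargin.
    lra.
Qed.

Lemma valid_edge_mass_le (W : TEC) :
  valid W -> edge_mass W <= 2 * entropy W /\ edge_mass W <= 2 * (1 - entropy W).
Proof.
  unfold valid, entropy, edge_mass.
  intros (Hp & Hq & Hr & Hs & Ht & Hsum).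
  split; lra.
Qed.

Lemma parallel_child_entropy (W : TEC) :
  balanced W -> entropy (parallel_child W) = entropy W ^ 2 - edge_mass W ^ 2 / 12.
Proof.
  destruct W as [p q r s t]; unfold balanced, entropy, edge_mass; simpl.
  intros [<- <-]; field.
Qed.

Lemma parallel_child_edge_mass (W : TEC) :
  balanced W ->
  edge_mass (parallel_child W) = 2 * entropy W * edge_mass W - 2 / 3 * edge_mass W ^ 2.
Proof.
  destruct W as [p q r s t]; unfold balanced, entropy, edge_mass; simpl.
  intros [<- <-]; field.
Qed.

Lemma serial_child_entropy (W : TEC) :
  valid W -> balanced W ->
  entropy (serial_child W) = 1 - ((1 - entropy W) ^ 2 - edge_mass W ^ 2 / 12).
Proof.
  destruct W as [p q r s t]; unfold valid, balanced, entropy, edge_mass; simpl.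
  intros (_ & _ & _ & _ & _ & Hsum) [<- <-].
  replace p with (1 - 3 * q - t) by lra.
  field.
Qed.

Lemma serial_child_edge_mass (W : TEC) :
  valid W -> balanced W ->
  edge_mass (serial_child W) = 2 * (1 - entropy W) * edge_mass W - 2 / 3 * edge_mass W ^ 2.
Proof.
  destruct W as [p q r s t]; unfold valid, balanced, entropy, edge_mass; simpl.
  intros (_ & _ & _ & _ & _ & Hsum) [<- <-].
  replace p with (1 - 3 * q - t) by lra.
  field.
Qed.

Theorem mainTheorem5 (W : TEC) :
  valid W -> balanced W -> Q_ge W alpha ->
  Q_ge (serial_child W) alpha /\ Q_ge (parallel_child W) alpha.
Proof.
  intros Hvalid Hbal HQ.
  apply Q_geP in HQ.
  destruct (valid_edge_mass_le W Hvalid) as [HE2H HE2cH].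
  split; apply Q_geP.
  - rewrite serial_child_entropy, serial_child_edge_mass by assumption.
    apply quetelet_ge_compl, quetelet_ge_parallel; [lra | lra |].
    now apply quetelet_ge_compl.
  - rewrite parallel_child_entropy, parallel_child_edge_mass by assumption.
    now apply quetelet_ge_parallel.
Qed.
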